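(* Let $0\le\alpha\le\beta\le\pi/2$, $P_1,P_2>0$, and let $\theta^*\in[\alpha,\beta]$ be a maximizer of $\phi$ on $[\alpha,\beta]$. (i) On $[\theta^*,\beta]$ consider the upper-diagonal corner curve $x(\theta)=\frac12\ln(1+\phi(\theta))-\frac12\ln(1+\phi_2(\theta))$, $y(\theta)=\frac12\ln(1+\phi_2(\theta))$; then along this curve $\frac{d^2y}{dx^2}\le0$, i.e. $y$ is a concave function of $x$. (ii) On $[\alpha,\theta^*]$ consider the lower-diagonal corner curve $x(\theta)=\frac12\ln(1+\phi_1(\theta))$, $y(\theta)=\frac12\ln(1+\phi(\theta))-\frac12\ln(1+\phi_1(\theta))$; then along this curve $y$ is likewise a concave function of $x$.
   Context: $\phi_1(\theta)=P_1\cos^2(\theta-\alpha)$, $\phi_2(\theta)=P_2\cos^2(\theta-\beta)$, $\phi=\phi_1+\phi_2$. These curves are the corner points (maximizing $R_2$ then $R_1$, resp. $R_1$ then $R_2$, on the dominant face) of the pentagonal rate sets $\{(R_1,R_2)\ge0:R_1\le\mathcal C(\phi_1(\theta)),R_2\le\mathcal C(\phi_2(\theta)),R_1+R_2\le\mathcal C(\phi(\theta))\}$, with rates in nats. *)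

From Stdlib Require Import Reals.
Open Scope R_scope.

Definition Cap (p : R) : R := / 2 * ln (1 + p).

Definition phi1 (P1 alpha theta : R) : R := P1 * (cos (theta - alpha)) ^ 2.
Definition phi2 (P2 beta theta : R) : R := P2 * (cos (theta - beta)) ^ 2.
Definition phi (P1 P2 alpha beta theta : R) : R :=
  phi1 P1 alpha theta + phi2 P2 beta theta.

Definition concave_on (S : R -> Prop) (g : R -> R) : Prop :=
  forall u v t, S u -> S v -> 0 <= t <= 1 ->
    t * g u + (1 - t) * g v <= g (t * u + (1 - t) * v).

(* "y is a concave function of x along the curve theta |-> (x theta, y theta),
   theta in [a,b]": there is g, concave on the range of x over [a,b],
   with y theta = g (x theta) for all theta in [a,b]. *)
Definition concave_curve (x y : R -> R) (a b : R) : Prop :=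
  exists g : R -> R,
    concave_on (fun u => exists th, a <= th <= b /\ u = x th) g /\
    forall th, a <= th <= b -> y th = g (x th).

From Stdlib Require Import Reals Lra Psatz ClassicalEpsilon.
From Coquelicot Require Import Coquelicot.
Open Scope R_scope.

(* Along a curve t |-> (x t, y t) with x strictly decreasing, y is a concave function
   of x as soon as the slope dy/dx is nondecreasing in t: Cauchy's mean value theorem
   turns this into monotone chord slopes.  On both corner curves dy/dx is a monotone
   function of S = (1 + phi1'/phi2') (1 + phi2)/(1 + phi) (resp. of T, with the roles of
   phi1 and phi2 exchanged).  The ratio phi1'/phi2' is nonincreasing on [alpha, beta],
   since phi1'(t2) phi2'(t1) - phi1'(t1) phi2'(t2) = - P1 P2 sin 2(beta - alpha)
   sin 2(t2 - t1); the same single-crossing property gives phi' <= 0 after the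
   maximizer and phi' >= 0 before it, which fixes the signs of both factors. *)

Lemma cauchy_mvt (f g df dg : R -> R) (a b : R) : a < b ->
  (forall t, is_derive f t (df t)) -> (forall t, is_derive g t (dg t)) ->
  exists c, a < c < b /\ (g b - g a) * df c = (f b - f a) * dg c.
Proof.
  intros ab f_der g_der.
  assert (f_derivable : forall c, a < c < b -> derivable_pt f c)
    by (intros c _; exists (df c); apply is_derive_Reals, f_der).
  assert (g_derivable : forall c, a < c < b -> derivable_pt g c)
    by (intros c _; exists (dg c); apply is_derive_Reals, g_der).
  destruct (MVT f g a b f_derivable g_derivable ab) as [c [c_in E]].
  - intros c _; apply derivable_continuous_pt; exists (df c); apply is_derive_Reals, f_der.
  - intros c _; apply derivable_continuous_pt; exists (dg c); apply is_derive_Reals, g_der.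
  - exists c; split; [exact c_in|].
    rewrite (derive_pt_eq_0 f c (df c) (f_derivable c c_in)) in E
      by apply is_derive_Reals, f_der.
    rewrite (derive_pt_eq_0 g c (dg c) (g_derivable c c_in)) in E
      by apply is_derive_Reals, g_der.
    exact E.
Qed.

Lemma mvt (f df : R -> R) (a b : R) : a < b -> (forall t, is_derive f t (df t)) ->
  exists c, a < c < b /\ f b - f a = df c * (b - a).
Proof.
  intros ab f_der.
  destruct (cauchy_mvt f id df (fun _ => 1) a b ab f_der is_derive_id) as [c [c_in E]].
  exists c; split; [exact c_in|]. unfold id in E. lra.
Qed.

Lemma is_derive_continuity (f df : R -> R) :
  (forall t, is_derive f t (df t)) -> continuity f.
Proof.
  intros f_der t; apply derivable_continuous_pt; exists (df t); apply is_derive_Reals, f_der.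
Qed.

Lemma Rdiv_le_cross (a b c d : R) : 0 < b * d -> a * d <= c * b -> a / b <= c / d.
Proof.
  intros bd H.
  assert (b <> 0) by (intros ->; lra). assert (d <> 0) by (intros ->; lra).
  replace (a / b) with (a * d * / (b * d)) by (field; auto).
  replace (c / d) with (c * b * / (b * d)) by (field; auto).
  apply Rmult_le_compat_r; [left; apply Rinv_0_lt_compat|]; assumption.
Qed.

Lemma Rmult_nonpos_le_compat (g1 g2 h1 h2 : R) :
  g1 <= g2 -> g2 <= 0 -> 0 <= h2 -> h2 <= h1 -> g1 * h1 <= g2 * h2.
Proof. intros; nra. Qed.

Lemma Rinv_le_contravar_neg (u v : R) : u <= v -> v < 0 -> / v <= / u.
Proof.
  intros uv v_neg.
  replace (/ v) with (- / (- v)) by (field; lra).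
  replace (/ u) with (- / (- u)) by (field; lra).
  apply Ropp_le_contravar, Rinv_le_contravar; lra.
Qed.

Lemma cos_sqr_decreasing (u v : R) : 0 <= u -> u <= v -> v <= PI / 2 -> cos v ^ 2 <= cos u ^ 2.
Proof.
  intros u_ge0 uv v_le.
  assert (0 <= cos v) by (apply cos_ge_0; lra).
  destruct (Req_dec u v) as [<-|u_neq_v]; [lra|].
  assert (cos v < cos u) by (apply cos_decreasing_1; lra). nra.
Qed.

Lemma is_derive_Cap (g : R -> R) (dg t : R) : is_derive g t dg -> 0 < 1 + g t ->
  is_derive (fun s => Cap (g s)) t (/ 2 * (dg / (1 + g t))).
Proof.
  intros g_der g_pos. unfold Cap. auto_derive.
  - repeat split; [exists dg; exact g_der|exact g_pos].
  - replace (Derive (fun s => g s) t) with dg by (symmetry; apply is_derive_unique, g_der).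
    field. lra.
Qed.

Section ConcaveParametrization.

Variables (x y dx dy q : R -> R) (a b : R).
Hypothesis x_der : forall t, is_derive x t (dx t).
Hypothesis y_der : forall t, is_derive y t (dy t).
Hypothesis dx_neg : forall t, a < t < b -> dx t < 0.
Hypothesis dy_eq : forall t, a < t < b -> dy t = q t * dx t.
Hypothesis q_incr : forall t1 t2, a < t1 -> t1 <= t2 -> t2 < b -> q t1 <= q t2.

Lemma param_decreasing (t1 t2 : R) : a <= t1 -> t1 < t2 -> t2 <= b -> x t2 < x t1.
Proof.
  intros t1_ge t12 t2_le.
  destruct (mvt x dx t1 t2 t12 x_der) as [c [c_in E]].
  assert (dx c < 0) by (apply dx_neg; lra). nra.
Qed.

Lemma param_chord (t1 t2 : R) : a <= t1 -> t1 < t2 -> t2 <= b ->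
  exists c, t1 < c < t2 /\ y t2 - y t1 = q c * (x t2 - x t1).
Proof.
  intros t1_ge t12 t2_le.
  destruct (cauchy_mvt y x dy dx t1 t2 t12 y_der x_der) as [c [c_in E]].
  exists c; split; [exact c_in|].
  assert (dx c < 0) by (apply dx_neg; lra).
  rewrite (dy_eq c) in E by lra.
  apply (Rmult_eq_reg_r (dx c)); [lra|]. nra.
Qed.

Lemma param_chord_slopes (t1 t2 t3 : R) : a <= t1 -> t1 < t2 -> t2 < t3 -> t3 <= b ->
  (y t2 - y t1) * (x t3 - x t2) <= (y t3 - y t2) * (x t2 - x t1).
Proof.
  intros t1_ge t12 t23 t3_le.
  destruct (param_chord t1 t2) as [c1 [c1_in ->]]; try lra.
  destruct (param_chord t2 t3) as [c2 [c2_in ->]]; try lra.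
  assert (q c1 <= q c2) by (apply q_incr; lra).
  assert (x t2 < x t1) by (apply param_decreasing; lra).
  assert (x t3 < x t2) by (apply param_decreasing; lra).
  assert (0 < (x t2 - x t1) * (x t3 - x t2)) by nra.
  assert (0 <= (q c2 - q c1) * ((x t2 - x t1) * (x t3 - x t2))) by (apply Rmult_le_pos; lra).
  nra.
Qed.

Lemma param_convex_combination (t1 t3 s : R) : a <= t1 -> t1 <= t3 -> t3 <= b -> 0 <= s <= 1 ->
  exists t2, t1 <= t2 <= t3 /\ x t2 = s * x t1 + (1 - s) * x t3 /\
    s * y t1 + (1 - s) * y t3 <= y t2.
Proof.
  intros t1_ge t13 t3_le s_in.
  destruct (Req_dec s 1) as [->|s_neq1].
  { exists t1; split; [lra|]; split; [ring|lra]. }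
  destruct (Req_dec s 0) as [->|s_neq0].
  { exists t3; split; [lra|]; split; [ring|lra]. }
  destruct (Req_dec t1 t3) as [<-|t1_neq_t3].
  { exists t1; split; [lra|]; split; [ring|apply Req_le; ring]. }
  assert (x13 : x t3 < x t1) by (apply param_decreasing; lra).
  set (w := s * x t1 + (1 - s) * x t3).
  destruct (IVT_cor (fun t => x t - w) t1 t3) as [t2 [t2_in x2]].
  - apply continuity_minus; [exact (is_derive_continuity x dx x_der)|].
    apply continuity_const; intros ? ?; reflexivity.
  - lra.
  - replace ((x t1 - w) * (x t3 - w)) with (- (s * (1 - s)) * (x t1 - x t3) ^ 2)
      by (unfold w; ring).
    assert (0 <= s * (1 - s)) by nra. pose proof (pow2_ge_0 (x t1 - x t3)). nra.
  - exists t2; split; [lra|]; split; [lra|].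
    assert (t2 <> t1) by (intros ->; unfold w in x2; nra).
    assert (t2 <> t3) by (intros ->; unfold w in x2; nra).
    pose proof (param_chord_slopes t1 t2 t3 t1_ge ltac:(lra) ltac:(lra) t3_le).
    replace (x t2) with w in * by lra. unfold w in *. nra.
Qed.

Lemma concave_curve_of_slope_increasing : concave_curve x y a b.
Proof.
  set (param u th := a <= th <= b /\ x th = u).
  set (g u := y (epsilon (inhabits 0) (param u))).
  assert (g_x : forall th, a <= th <= b -> g (x th) = y th).
  { intros th th_in. unfold g.
    destruct (epsilon_spec (inhabits 0) (param (x th))) as [e_in e_x]; [exists th; split; auto|].
    set (e := epsilon (inhabits 0) (param (x th))) in *.
    destruct (Rtotal_order e th) as [L|[->|L]]; [|reflexivity|].
    - assert (x th < x e) by (apply param_decreasing; lra). lra.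
    - assert (x e < x th) by (apply param_decreasing; lra). lra. }
  exists g; split; [|intros th th_in; symmetry; apply g_x, th_in].
  intros u v s [tu [tu_in ->]] [tv [tv_in ->]] s_in.
  rewrite !g_x by assumption.
  destruct (Rle_lt_dec tu tv).
  - destruct (param_convex_combination tu tv s) as [t2 [t2_in [<- Y]]]; try lra.
    rewrite g_x; lra.
  - destruct (param_convex_combination tv tu (1 - s)) as [t2 [t2_in [X Y]]]; try lra.
    replace (s * x tu + (1 - s) * x tv) with (x t2) by lra.
    rewrite g_x; lra.
Qed.

End ConcaveParametrization.

Section CornerCurves.

Variables (alpha beta P1 P2 : R).
Hypotheses (alpha_ge0 : 0 <= alpha) (alpha_le_beta : alpha <= beta) (beta_le : beta <= PI / 2)
  (P1_pos : 0 < P1) (P2_pos : 0 < P2).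

Let p1 := phi1 P1 alpha.
Let p2 := phi2 P2 beta.
Let p := phi P1 P2 alpha beta.
Let dp1 (t : R) := - (P1 * sin (2 * (t - alpha))).
Let dp2 (t : R) := P2 * sin (2 * (beta - t)).

Lemma is_derive_p1 (t : R) : is_derive p1 t (dp1 t).
Proof. unfold p1, dp1, phi1. auto_derive; auto. rewrite sin_2a. unfold Rminus. ring. Qed.

Lemma is_derive_p2 (t : R) : is_derive p2 t (dp2 t).
Proof.
  unfold p2, dp2, phi2. auto_derive; auto.
  replace (2 * (beta - t)) with (- (2 * (t - beta))) by ring.
  rewrite sin_neg, sin_2a. unfold Rminus. ring.
Qed.

Lemma is_derive_p (t : R) : is_derive p t (dp1 t + dp2 t).
Proof. apply (is_derive_plus p1 p2); [apply is_derive_p1|apply is_derive_p2]. Qed.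

Lemma p1_ge0 (t : R) : 0 <= p1 t.
Proof. unfold p1, phi1. apply Rmult_le_pos; [lra|apply pow2_ge_0]. Qed.

Lemma p2_ge0 (t : R) : 0 <= p2 t.
Proof. unfold p2, phi2. apply Rmult_le_pos; [lra|apply pow2_ge_0]. Qed.

Lemma p_ge0 (t : R) : 0 <= p t.
Proof. pose proof (p1_ge0 t); pose proof (p2_ge0 t). unfold p, phi. fold (p1 t) (p2 t). lra. Qed.

Lemma dp1_neg (t : R) : alpha < t < beta -> dp1 t < 0.
Proof.
  intros t_in. unfold dp1.
  assert (0 < sin (2 * (t - alpha))) by (apply sin_gt_0; lra). nra.
Qed.

Lemma dp2_pos (t : R) : alpha < t < beta -> 0 < dp2 t.
Proof.
  intros t_in. unfold dp2.
  assert (0 < sin (2 * (beta - t))) by (apply sin_gt_0; lra). nra.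
Qed.

Lemma dp_cross_le (t1 t2 : R) : alpha <= t1 -> t1 <= t2 -> t2 <= beta ->
  dp1 t2 * dp2 t1 <= dp1 t1 * dp2 t2.
Proof.
  intros t1_ge t12 t2_le. unfold dp1, dp2.
  set (u := 2 * (t1 - alpha)). set (v := 2 * (t2 - alpha)). set (D := 2 * (beta - alpha)).
  replace (2 * (beta - t1)) with (D - u) by (unfold D, u; ring).
  replace (2 * (beta - t2)) with (D - v) by (unfold D, v; ring).
  assert (E : - (P1 * sin u) * (P2 * sin (D - v)) - - (P1 * sin v) * (P2 * sin (D - u))
              = P1 * P2 * (sin D * sin (v - u)))
    by (rewrite !sin_minus; ring).
  assert (0 <= sin D) by (apply sin_ge_0; unfold D; lra).
  assert (0 <= sin (v - u)) by (apply sin_ge_0; unfold u, v; lra).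
  assert (0 <= P1 * P2 * (sin D * sin (v - u))) by (apply Rmult_le_pos; nra).
  lra.
Qed.

Lemma dp1_div_dp2_decreasing (t1 t2 : R) : alpha < t1 -> t1 <= t2 -> t2 < beta ->
  dp1 t2 / dp2 t2 <= dp1 t1 / dp2 t1.
Proof.
  intros t1_gt t12 t2_lt.
  pose proof (dp2_pos t1 ltac:(lra)); pose proof (dp2_pos t2 ltac:(lra)).
  apply Rdiv_le_cross; [nra|apply dp_cross_le; lra].
Qed.

Lemma dp2_div_dp1_increasing (t1 t2 : R) : alpha < t1 -> t1 <= t2 -> t2 < beta ->
  dp2 t1 / dp1 t1 <= dp2 t2 / dp1 t2.
Proof.
  intros t1_gt t12 t2_lt.
  pose proof (dp1_neg t1 ltac:(lra)); pose proof (dp1_neg t2 ltac:(lra)).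
  apply Rdiv_le_cross; [nra|].
  pose proof (dp_cross_le t1 t2 ltac:(lra) t12 ltac:(lra)). lra.
Qed.

Lemma p1_decreasing (t1 t2 : R) : alpha <= t1 -> t1 <= t2 -> t2 <= beta -> p1 t2 <= p1 t1.
Proof.
  intros. unfold p1, phi1. apply Rmult_le_compat_l; [lra|]. apply cos_sqr_decreasing; lra.
Qed.

Lemma p2_increasing (t1 t2 : R) : alpha <= t1 -> t1 <= t2 -> t2 <= beta -> p2 t1 <= p2 t2.
Proof.
  intros. unfold p2, phi2. apply Rmult_le_compat_l; [lra|].
  rewrite <- (cos_neg (t1 - beta)), <- (cos_neg (t2 - beta)).
  apply cos_sqr_decreasing; lra.
Qed.

Lemma p2_over_p_increasing (t1 t2 : R) : alpha <= t1 -> t1 <= t2 -> t2 <= beta ->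
  (1 + p2 t1) / (1 + p t1) <= (1 + p2 t2) / (1 + p t2).
Proof.
  intros t1_ge t12 t2_le. unfold p, phi. fold (p1 t1) (p1 t2) (p2 t1) (p2 t2).
  pose proof (p1_decreasing t1 t2 t1_ge t12 t2_le); pose proof (p2_increasing t1 t2 t1_ge t12 t2_le).
  pose proof (p1_ge0 t1); pose proof (p1_ge0 t2); pose proof (p2_ge0 t1); pose proof (p2_ge0 t2).
  apply Rdiv_le_cross; nra.
Qed.

Lemma p1_over_p_decreasing (t1 t2 : R) : alpha <= t1 -> t1 <= t2 -> t2 <= beta ->
  (1 + p1 t2) / (1 + p t2) <= (1 + p1 t1) / (1 + p t1).
Proof.
  intros t1_ge t12 t2_le. unfold p, phi. fold (p1 t1) (p1 t2) (p2 t1) (p2 t2).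
  pose proof (p1_decreasing t1 t2 t1_ge t12 t2_le); pose proof (p2_increasing t1 t2 t1_ge t12 t2_le).
  pose proof (p1_ge0 t1); pose proof (p1_ge0 t2); pose proof (p2_ge0 t1); pose proof (p2_ge0 t2).
  apply Rdiv_le_cross; nra.
Qed.

Lemma dp_pos_left (c t : R) : alpha < c -> c <= t -> t < beta ->
  0 < dp1 t + dp2 t -> 0 < dp1 c + dp2 c.
Proof.
  intros c_gt ct t_lt dp_pos.
  pose proof (dp_cross_le c t ltac:(lra) ct ltac:(lra)).
  pose proof (dp2_pos c ltac:(lra)); pose proof (dp2_pos t ltac:(lra)).
  assert (0 < dp2 c * (dp1 t + dp2 t)) by nra.
  nra.
Qed.

Lemma dp_neg_right (t c : R) : alpha < t -> t <= c -> c < beta ->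
  dp1 t + dp2 t < 0 -> dp1 c + dp2 c < 0.
Proof.
  intros t_gt tc c_lt dp_neg.
  pose proof (dp_cross_le t c ltac:(lra) tc ltac:(lra)).
  pose proof (dp2_pos c ltac:(lra)); pose proof (dp2_pos t ltac:(lra)).
  assert (dp2 c * (dp1 t + dp2 t) < 0) by nra.
  nra.
Qed.

Section Maximizer.

Variable ts : R.
Hypothesis ts_in : alpha <= ts <= beta.
Hypothesis ts_max : forall th, alpha <= th <= beta -> p th <= p ts.

Lemma dp_nonpos_after_max (t : R) : ts < t < beta -> dp1 t + dp2 t <= 0.
Proof.
  intros t_in. apply Rnot_lt_le. intros dp_pos.
  destruct (mvt p (fun s => dp1 s + dp2 s) ts t ltac:(lra) is_derive_p) as [c [c_in E]].
  pose proof (dp_pos_left c t ltac:(lra) ltac:(lra) ltac:(lra) dp_pos).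
  pose proof (ts_max t ltac:(lra)). nra.
Qed.

Lemma dp_nonneg_before_max (t : R) : alpha < t < ts -> 0 <= dp1 t + dp2 t.
Proof.
  intros t_in. apply Rnot_lt_le. intros dp_neg.
  destruct (mvt p (fun s => dp1 s + dp2 s) t ts ltac:(lra) is_derive_p) as [c [c_in E]].
  pose proof (dp_neg_right t c ltac:(lra) ltac:(lra) ltac:(lra) dp_neg).
  pose proof (ts_max t ltac:(lra)). nra.
Qed.

Let S (t : R) := (1 + dp1 t / dp2 t) * ((1 + p2 t) / (1 + p t)).

Lemma S_nonpos (t : R) : ts < t < beta -> S t <= 0.
Proof.
  intros t_in. unfold S.
  pose proof (dp2_pos t ltac:(lra)); pose proof (dp_nonpos_after_max t t_in).
  pose proof (p2_ge0 t); pose proof (p_ge0 t).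
  apply Rmult_le_0_r.
  - replace (1 + dp1 t / dp2 t) with ((dp1 t + dp2 t) * / dp2 t) by (field; lra).
    apply Rmult_le_0_r; [lra|left; apply Rinv_0_lt_compat; lra].
  - apply Rdiv_le_0_compat; lra.
Qed.

Lemma S_decreasing (t1 t2 : R) : ts < t1 -> t1 <= t2 -> t2 < beta -> S t2 <= S t1.
Proof.
  intros t1_gt t12 t2_lt. unfold S.
  apply Rmult_nonpos_le_compat.
  - pose proof (dp1_div_dp2_decreasing t1 t2 ltac:(lra) t12 t2_lt). lra.
  - pose proof (dp2_pos t1 ltac:(lra)); pose proof (dp_nonpos_after_max t1 ltac:(lra)).
    replace (1 + dp1 t1 / dp2 t1) with ((dp1 t1 + dp2 t1) * / dp2 t1) by (field; lra).
    apply Rmult_le_0_r; [lra|left; apply Rinv_0_lt_compat; lra].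
  - pose proof (p2_ge0 t1); pose proof (p_ge0 t1). apply Rdiv_le_0_compat; lra.
  - apply p2_over_p_increasing; lra.
Qed.

Lemma upper_corner_concave :
  concave_curve (fun th => Cap (p th) - Cap (p2 th)) (fun th => Cap (p2 th)) ts beta.
Proof.
  set (dy t := / 2 * (dp2 t / (1 + p2 t))).
  set (dx t := / 2 * ((dp1 t + dp2 t) / (1 + p t)) - dy t).
  assert (dy_pos : forall t, ts < t < beta -> 0 < dy t).
  { intros t t_in. pose proof (dp2_pos t ltac:(lra)); pose proof (p2_ge0 t).
    unfold dy. apply Rmult_lt_0_compat; [lra|apply Rdiv_lt_0_compat; lra]. }
  assert (dx_eq : forall t, ts < t < beta -> dx t = dy t * (S t - 1)).
  { intros t t_in. pose proof (dp2_pos t ltac:(lra)); pose proof (p2_ge0 t); pose proof (p_ge0 t).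
    unfold dx, dy, S. field. lra. }
  apply (concave_curve_of_slope_increasing _ _ dx dy (fun t => / (S t - 1))).
  - intros t. pose proof (p2_ge0 t); pose proof (p_ge0 t).
    apply (is_derive_minus (fun s => Cap (p s)) (fun s => Cap (p2 s)));
      apply is_derive_Cap; [apply is_derive_p|lra|apply is_derive_p2|lra].
  - intros t. pose proof (p2_ge0 t). apply is_derive_Cap; [apply is_derive_p2|lra].
  - intros t t_in. rewrite dx_eq by exact t_in.
    pose proof (dy_pos t t_in); pose proof (S_nonpos t t_in). nra.
  - intros t t_in. rewrite dx_eq by exact t_in.
    pose proof (S_nonpos t t_in). field. lra.
  - intros t1 t2 t1_gt t12 t2_lt.
    pose proof (S_decreasing t1 t2 t1_gt t12 t2_lt); pose proof (S_nonpos t1 ltac:(lra)).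
    apply Rinv_le_contravar_neg; lra.
Qed.

Let T (t : R) := (1 + dp2 t / dp1 t) * ((1 + p1 t) / (1 + p t)).

Lemma T_nonpos (t : R) : alpha < t < ts -> T t <= 0.
Proof.
  intros t_in. unfold T.
  pose proof (dp1_neg t ltac:(lra)); pose proof (dp_nonneg_before_max t t_in).
  pose proof (p1_ge0 t); pose proof (p_ge0 t).
  apply Rmult_le_0_r.
  - replace (1 + dp2 t / dp1 t) with ((dp1 t + dp2 t) * / dp1 t) by (field; lra).
    apply Rmult_le_0_l; [lra|left; apply Rinv_lt_0_compat; lra].
  - apply Rdiv_le_0_compat; lra.
Qed.

Lemma T_increasing (t1 t2 : R) : alpha < t1 -> t1 <= t2 -> t2 < ts -> T t1 <= T t2.
Proof.
  intros t1_gt t12 t2_lt. unfold T.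
  apply Rmult_nonpos_le_compat.
  - pose proof (dp2_div_dp1_increasing t1 t2 t1_gt t12 ltac:(lra)). lra.
  - pose proof (dp1_neg t2 ltac:(lra)); pose proof (dp_nonneg_before_max t2 ltac:(lra)).
    replace (1 + dp2 t2 / dp1 t2) with ((dp1 t2 + dp2 t2) * / dp1 t2) by (field; lra).
    apply Rmult_le_0_l; [lra|left; apply Rinv_lt_0_compat; lra].
  - pose proof (p1_ge0 t2); pose proof (p_ge0 t2). apply Rdiv_le_0_compat; lra.
  - apply p1_over_p_decreasing; lra.
Qed.

Lemma lower_corner_concave :
  concave_curve (fun th => Cap (p1 th)) (fun th => Cap (p th) - Cap (p1 th)) alpha ts.
Proof.
  set (dx t := / 2 * (dp1 t / (1 + p1 t))).
  set (dy t := / 2 * ((dp1 t + dp2 t) / (1 + p t)) - dx t).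
  apply (concave_curve_of_slope_increasing _ _ dx dy (fun t => T t - 1)).
  - intros t. pose proof (p1_ge0 t). apply is_derive_Cap; [apply is_derive_p1|lra].
  - intros t. pose proof (p1_ge0 t); pose proof (p_ge0 t).
    apply (is_derive_minus (fun s => Cap (p s)) (fun s => Cap (p1 s)));
      apply is_derive_Cap; [apply is_derive_p|lra|apply is_derive_p1|lra].
  - intros t t_in. pose proof (dp1_neg t ltac:(lra)); pose proof (p1_ge0 t).
    assert (dp1 t / (1 + p1 t) < 0) by (apply Rdiv_neg_pos; lra).
    unfold dx. lra.
  - intros t t_in. pose proof (dp1_neg t ltac:(lra)); pose proof (p1_ge0 t); pose proof (p_ge0 t).
    unfold dy, dx, T. field. lra.
  - intros t1 t2 t1_gt t12 t2_lt. pose proof (T_increasing t1 t2 t1_gt t12 t2_lt). lra.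
Qed.

End Maximizer.

End CornerCurves.

Theorem lemma8 (alpha beta P1 P2 thstar : R) :
  0 <= alpha -> alpha <= beta -> beta <= PI / 2 ->
  0 < P1 -> 0 < P2 ->
  alpha <= thstar <= beta ->
  (forall th, alpha <= th <= beta ->
     phi P1 P2 alpha beta th <= phi P1 P2 alpha beta thstar) ->
  concave_curve
    (fun th => Cap (phi P1 P2 alpha beta th) - Cap (phi2 P2 beta th))
    (fun th => Cap (phi2 P2 beta th))
    thstar beta
  /\
  concave_curve
    (fun th => Cap (phi1 P1 alpha th))
    (fun th => Cap (phi P1 P2 alpha beta th) - Cap (phi1 P1 alpha th))
    alpha thstar.
Proof.
  intros alpha_ge0 alpha_le_beta beta_le P1_pos P2_pos thstar_in thstar_max.
  split.
  - exact (upper_corner_concave alpha beta P1 P2 alpha_ge0 alpha_le_beta beta_le P1_pos P2_pos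
             thstar thstar_in thstar_max).
  - exact (lower_corner_concave alpha beta P1 P2 alpha_ge0 alpha_le_beta beta_le P1_pos P2_pos
             thstar thstar_in thstar_max).
Qed.
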